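(* Let $G$ be a connected graph containing a cycle. Then the intersection of any (possibly infinite) family of pre-cycle cores of $G$ is again a pre-cycle core of $G$. Consequently, $G$ has a unique minimal pre-cycle core.
   Context: Graphs are simple and unoriented, possibly infinite. A cycle in $G$ is a closed path $(x_0,\dots,x_n=x_0)$ with no repeated vertices except $x_0=x_n$ and no edges $(x_i,x_j)$ of $G$ with $i-j\not\equiv0,\pm1\pmod n$. A pre-cycle core of $G$ is a subset $I\subseteq V(G)$ such that $G|_I$ is connected and contains all cycles of $G$. *)

From Stdlib Require Import Arith Relations.

Section Graphs.
Variable V : Type.
Variable adj : V -> V -> Prop.

Definition simple_graph : Prop :=
  (forall x y, adj x y -> adj y x) /\ (forall x, ~ adj x x).

(* A cycle (x_0, ..., x_n = x_0): closed path, n >= 3, no repeated vertices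
   except x_0 = x_n, and no chords: an edge x_i x_j (i, j < n) only if
   i - j = 0, 1 or -1 modulo n. *)
Definition is_cycle (x : nat -> V) (n : nat) : Prop :=
  3 <= n /\
  x n = x 0 /\
  (forall i, i < n -> adj (x i) (x (S i))) /\
  (forall i j, i < n -> j < n -> x i = x j -> i = j) /\
  (forall i j, i < n -> j < n -> adj (x i) (x j) ->
     (i + n - j) mod n = 0 \/ (i + n - j) mod n = 1 \/ (i + n - j) mod n = n - 1).

Definition has_cycle : Prop := exists x n, is_cycle x n.

Definition induced_connected (S : V -> Prop) : Prop :=
  forall a b, S a -> S b ->
    clos_refl_trans V (fun u v => S u /\ S v /\ adj u v) a b.

Definition connected : Prop := induced_connected (fun _ => True).

Definition pre_cycle_core (I : V -> Prop) : Prop :=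
  induced_connected I /\
  (forall x n, is_cycle x n -> forall i, i <= n -> I (x i)).

Definition minimal_pre_cycle_core (I : V -> Prop) : Prop :=
  pre_cycle_core I /\
  forall J : V -> Prop, pre_cycle_core J -> (forall v, J v -> I v) -> (forall v, I v -> J v).

End Graphs.

(* A shortest walk between two vertices of a pre-cycle core J stays inside J.
   Otherwise some inner vertex v is missing from J, and its two neighbours on
   the walk are joined by a walk avoiding v: back along the walk, through J,
   and forward again.  A shortest such detour is an induced path seeing v only
   at its ends, so closing it at v gives a cycle, which forces v into J.
   Hence intersections of cores stay connected, and the intersection of all
   cores is the unique minimal one. *)

From Stdlib Require Import Arith Relations.
From Stdlib Require Import Lia Classical.

Lemma nat_least (P : nat -> Prop) n : P n -> exists m, P m /\ forall k, P k -> m <= k.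
Proof.
  intros Hn.
  destruct (dec_inh_nat_subset_has_unique_least_element P (fun k => classic (P k))
              (ex_intro _ n Hn)) as (m & [Hm Hle] & _).
  eauto.
Qed.

(* With [g = i + n - j] for [i, j < n], the premise lists the ways [i] and [j]
   can be neighbours on the cycle [0, ..., n - 1]. *)
Lemma mod_cyclic_gap n g : 2 <= n ->
  g = n \/ g = S n \/ S g = n \/ g = 1 \/ S g = 2 * n ->
  g mod n = 0 \/ g mod n = 1 \/ g mod n = n - 1.
Proof.
  intros Hn [->|[->|[Hg|[->|Hg]]]].
  - left; apply Nat.Div0.mod_same.
  - right; left. replace (S n) with (1 + 1 * n) by lia.
    rewrite Nat.Div0.mod_add; apply Nat.mod_small; lia.
  - right; right. rewrite Nat.mod_small; lia.
  - right; left; apply Nat.mod_small; lia.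
  - right; right. replace g with (n - 1 + 1 * n) by lia.
    rewrite Nat.Div0.mod_add; apply Nat.mod_small; lia.
Qed.

Section Walks.
Variables (V : Type) (R : V -> V -> Prop).

Lemma clos_rt_sym : (forall x y, R x y -> R y x) ->
  forall a b, clos_refl_trans V R a b -> clos_refl_trans V R b a.
Proof.
  intros Hsym a b H; induction H; eauto using rt_step, rt_refl, rt_trans.
Qed.

Lemma clos_rt_mono (R' : V -> V -> Prop) : (forall x y, R x y -> R' x y) ->
  forall a b, clos_refl_trans V R a b -> clos_refl_trans V R' a b.
Proof.
  intros Hsub a b H; induction H; eauto using rt_step, rt_refl, rt_trans.
Qed.

Definition walk (w : nat -> V) (L : nat) : Prop :=
  forall k, k < L -> R (w k) (w (S k)).

Lemma clos_rt_walk a b : clos_refl_trans V R a b ->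
  exists w L, w 0 = a /\ w L = b /\ walk w L.
Proof.
  intros H; apply clos_rt_rt1n in H.
  induction H as [x|x y z Hxy _ (w & L & W0 & WL & Hw)].
  - exists (fun _ => x), 0; repeat split; intros k Hk; lia.
  - exists (fun k => match k with 0 => x | S k => w k end), (S L).
    repeat split; [exact WL|]. intros [|k] Hk; [rewrite W0; exact Hxy|apply Hw; lia].
Qed.

Lemma walk_clos_rt (w : nat -> V) i j : i <= j ->
  (forall k, i <= k -> k < j -> R (w k) (w (S k))) -> clos_refl_trans V R (w i) (w j).
Proof.
  induction j as [|j IH]; intros Hij Hw.
  - replace i with 0 by lia; apply rt_refl.
  - destruct (Nat.eq_dec i (S j)) as [->|Hne]; [apply rt_refl|].
    apply rt_trans with (w j); [apply IH; intros; try apply Hw; lia|].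
    apply rt_step, Hw; lia.
Qed.

Definition geodesic (w : nat -> V) (L : nat) : Prop :=
  walk w L /\ forall w' L', walk w' L' -> w' 0 = w 0 -> w' L' = w L -> L <= L'.

Lemma geodesic_exists a b : clos_refl_trans V R a b ->
  exists w L, w 0 = a /\ w L = b /\ geodesic w L.
Proof.
  intros Hab. destruct (clos_rt_walk a b Hab) as (w0 & L0 & H0).
  destruct (nat_least (fun L => exists w, w 0 = a /\ w L = b /\ walk w L) L0)
    as (L & (w & W0 & WL & Hw) & Hmin); [eauto|].
  exists w, L; repeat split; auto.
  intros w' L' Hw' E0 EL. apply Hmin. exists w'; rewrite E0, EL; auto.
Qed.

Definition skip (w : nat -> V) (i d : nat) : nat -> V :=
  fun k => if k <=? i then w k else w (k + d).

Lemma geodesic_no_shortcut w L i d : geodesic w L -> 0 < d -> i + d <= L ->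
  (i + d < L -> R (w i) (w (S (i + d)))) -> (i + d = L -> w i = w L) -> False.
Proof.
  intros [Hw Hmin] Hd HL Hstep Hend.
  assert (Hskip : walk (skip w i d) (L - d)).
  { intros k Hk. unfold skip.
    destruct (Nat.leb_spec k i), (Nat.leb_spec (S k) i).
    - apply Hw; lia.
    - replace k with i by lia. apply Hstep; lia.
    - lia.
    - replace (S k + d) with (S (k + d)) by lia. apply Hw; lia. }
  assert (Hlast : skip w i d (L - d) = w L).
  { unfold skip. destruct (Nat.leb_spec (L - d) i).
    - replace (L - d) with i by lia. apply Hend; lia.
    - f_equal; lia. }
  specialize (Hmin _ _ Hskip eq_refl Hlast). lia.
Qed.

Lemma geodesic_inj w L : geodesic w L ->
  forall i j, i <= L -> j <= L -> w i = w j -> i = j.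
Proof.
  intros Hg.
  assert (Hlt : forall i j, i < j -> j <= L -> w i = w j -> False).
  { intros i j Hij HjL Heq.
    apply (geodesic_no_shortcut w L i (j - i) Hg); try lia.
    - intros Hj. replace (i + (j - i)) with j by lia. rewrite Heq. apply Hg; lia.
    - intros Hj. replace L with j by lia. exact Heq. }
  intros i j Hi Hj Heq. destruct (Nat.lt_total i j) as [H|[H|H]]; auto.
  - exfalso; eauto.
  - exfalso; eauto.
Qed.

Lemma geodesic_chordless w L : geodesic w L ->
  forall i j, i + 1 < j -> j <= L -> ~ R (w i) (w j).
Proof.
  intros Hg i j Hij HjL Hij'.
  apply (geodesic_no_shortcut w L i (j - i - 1) Hg); try lia.
  intros _. replace (S (i + (j - i - 1))) with j by lia. exact Hij'.
Qed.

End Walks.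

Arguments walk {V} R w L.
Arguments geodesic {V} R w L.
Arguments geodesic_inj {V R w L}.
Arguments geodesic_chordless {V R w L}.

Section Graph.
Variables (V : Type) (adj : V -> V -> Prop).
Hypothesis adj_sym : forall x y, adj x y -> adj y x.

Definition close_path (v : V) (w : nat -> V) (L : nat) : nat -> V :=
  fun k => match k with 0 => v | S k => if k <=? L then w k else v end.

Lemma close_path_is_cycle v w L : 1 <= L -> walk adj w L ->
  (forall i j, i <= L -> j <= L -> w i = w j -> i = j) ->
  (forall i j, i + 1 < j -> j <= L -> ~ adj (w i) (w j)) ->
  (forall k, k <= L -> w k <> v) ->
  adj v (w 0) -> adj v (w L) -> (forall k, 0 < k < L -> ~ adj v (w k)) ->
  is_cycle V adj (close_path v w L) (S (S L)).
Proof.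
  intros HL Hw Hinj Hchord Hv Hv0 HvL Hvk.
  assert (Hin : forall k, k <= L -> close_path v w L (S k) = w k).
  { intros k Hk; simpl. destruct (Nat.leb_spec k L); [reflexivity|lia]. }
  assert (Hout : close_path v w L (S (S L)) = v).
  { change (close_path v w L (S (S L))) with (if S L <=? L then w (S L) else v).
    destruct (Nat.leb_spec (S L) L); [lia|reflexivity]. }
  assert (Hnear : forall k l, k <= L -> l <= L -> adj (w k) (w l) -> l <= S k /\ k <= S l).
  { intros k l Hk Hl Ha. split; apply Nat.nlt_ge; intro Hlt;
      [apply (Hchord k l)|apply (Hchord l k)]; auto; lia. }
  assert (Hend : forall l, l <= L -> adj v (w l) -> l = 0 \/ l = L).
  { intros l Hl Ha. destruct (Nat.eq_dec l 0); auto. destruct (Nat.eq_dec l L); auto.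
    exfalso; apply (Hvk l); auto; lia. }
  split; [lia|]. split; [rewrite Hout; reflexivity|]. split; [|split].
  - intros [|k] Hk; rewrite Hin by lia; [exact Hv0|].
    destruct (Nat.eq_dec k L) as [->|Hne]; [rewrite Hout; auto|].
    rewrite Hin by lia. apply Hw; lia.
  - intros [|k] [|l] Hk Hl Heq; auto; try rewrite Hin in Heq by lia.
    + exfalso; apply (Hv l); auto; lia.
    + exfalso; apply (Hv k); auto; lia.
    + rewrite Hin in Heq by lia. f_equal; apply Hinj; auto; lia.
  - intros i j Hi Hj Ha. apply mod_cyclic_gap; [lia|].
    destruct i as [|k], j as [|l].
    + lia.
    + rewrite Hin in Ha by lia. apply Hend in Ha; lia.
    + rewrite Hin in Ha by lia. apply adj_sym, Hend in Ha; lia.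
    + rewrite !Hin in Ha by lia. apply Hnear in Ha; lia.
Qed.

Definition adj_avoiding (v : V) (x y : V) : Prop := adj x y /\ x <> v /\ y <> v.

Lemma adj_avoiding_sym v x y : adj_avoiding v x y -> adj_avoiding v y x.
Proof. intros (Hxy & Hx & Hy); repeat split; auto. Qed.

Lemma cycle_through_vertex v a b : adj v a -> adj v b -> a <> b ->
  clos_refl_trans V (adj_avoiding v) a b -> exists x n, is_cycle V adj x n /\ x 0 = v.
Proof.
  intros Ha Hb Hab Hconn.
  destruct (clos_rt_walk _ _ a b Hconn) as (w0 & L0 & W0 & WL & Hw0).
  destruct (nat_least (fun L => exists w, walk (adj_avoiding v) w L /\
                         adj v (w 0) /\ adj v (w L) /\ w 0 <> w L) L0)
    as (L & (w & Hw & Hv0 & HvL & Hne) & Hmin).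
  { exists w0; rewrite W0, WL; auto. }
  assert (Hg : geodesic (adj_avoiding v) w L).
  { split; auto. intros w' L' Hw' E0 EL. apply Hmin.
    exists w'; rewrite E0, EL; auto. }
  assert (HL : 1 <= L) by (destruct L; [contradiction|lia]).
  assert (Hv : forall k, k <= L -> w k <> v).
  { intros k Hk. destruct (Nat.eq_dec k L) as [->|HkL].
    - replace L with (S (L - 1)) by lia. apply Hw; lia.
    - apply Hw; lia. }
  exists (close_path v w L), (S (S L)); split; [|reflexivity].
  apply close_path_is_cycle; auto.
  - intros k Hk; apply Hw, Hk.
  - exact (geodesic_inj Hg).
  - intros i j Hij Hj Hadj. apply (geodesic_chordless Hg i j Hij Hj).
    repeat split; auto; apply Hv; lia.
  - intros k Hk Hadj.
    assert (Hk0 : w 0 <> w k) by (intro E; apply (geodesic_inj Hg) in E; lia).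
    enough (L <= k) by lia.
    apply Hmin; exists w; split; [intros j Hj; apply Hw; lia|auto].
Qed.

Lemma geodesic_in_core J w L : pre_cycle_core V adj J -> geodesic adj w L ->
  J (w 0) -> J (w L) -> forall t, t <= L -> J (w t).
Proof.
  intros [HJconn HJcyc] Hg HJ0 HJL t Ht.
  apply NNPP; intros HJt.
  assert (Ht0 : t <> 0) by (intros ->; contradiction).
  assert (HtL : t <> L) by (intros ->; contradiction).
  pose proof (proj1 Hg) as Hw.
  pose proof (geodesic_inj Hg) as Hinj.
  set (v := w t) in *.
  assert (Hstep : forall k, k < L -> k <> t -> S k <> t ->
                    adj_avoiding v (w k) (w (S k))).
  { intros k Hk Hkt HSkt. repeat split; [apply Hw; lia|..];
      intros E; apply Hinj in E; lia. }
  assert (Hleft : clos_refl_trans V (adj_avoiding v) (w (t - 1)) (w 0)).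
  { apply clos_rt_sym; [apply adj_avoiding_sym|]. apply walk_clos_rt; [lia|].
    intros k _ Hk; apply Hstep; lia. }
  assert (Hcore : clos_refl_trans V (adj_avoiding v) (w 0) (w L)).
  { apply (clos_rt_mono _ (fun x y => J x /\ J y /\ adj x y)); [|apply HJconn; auto].
    intros x y (Jx & Jy & Hxy). repeat split; auto; intros ->; contradiction. }
  assert (Hright : clos_refl_trans V (adj_avoiding v) (w L) (w (S t))).
  { apply clos_rt_sym; [apply adj_avoiding_sym|]. apply walk_clos_rt; [lia|].
    intros k Hk HkL; apply Hstep; lia. }
  destruct (cycle_through_vertex v (w (t - 1)) (w (S t))) as (x & n & Hx & Hx0).
  - unfold v; replace t with (S (t - 1)) at 1 by lia. apply adj_sym, Hw; lia.
  - apply Hw; lia.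
  - intros E; apply Hinj in E; lia.
  - eauto using rt_trans.
  - apply HJt; fold v; rewrite <- Hx0. apply (HJcyc x n Hx 0); lia.
Qed.

Lemma pre_cycle_core_bigcap (K : Type) (F : K -> V -> Prop) : connected V adj ->
  (forall k, pre_cycle_core V adj (F k)) -> pre_cycle_core V adj (fun v => forall k, F k v).
Proof.
  intros Hconn HF. split.
  - intros a b Ha Hb.
    assert (Hab : clos_refl_trans V adj a b).
    { apply (clos_rt_mono _ (fun x y => True /\ True /\ adj x y)); [tauto|].
      apply Hconn; exact I. }
    destruct (geodesic_exists _ _ a b Hab) as (w & L & <- & <- & Hg).
    assert (Hin : forall t, t <= L -> forall k, F k (w t)).
    { intros t Ht k; apply (geodesic_in_core (F k) w L); auto. }
    apply walk_clos_rt; [lia|]. intros t _ Ht.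
    repeat split; [apply Hin; lia|apply Hin; lia|apply Hg; lia].
  - intros x n Hx i Hi k. exact (proj2 (HF k) x n Hx i Hi).
Qed.

Lemma minimal_pre_cycle_core_unique : connected V adj ->
  exists I, minimal_pre_cycle_core V adj I /\
    forall J, minimal_pre_cycle_core V adj J -> forall v, J v <-> I v.
Proof.
  intros Hconn.
  set (Imin := fun v => forall J : {J | pre_cycle_core V adj J}, proj1_sig J v).
  assert (Hmin : pre_cycle_core V adj Imin).
  { apply pre_cycle_core_bigcap; [exact Hconn|]. intros J; exact (proj2_sig J). }
  exists Imin; split.
  - split; [exact Hmin|]. intros J HJ _ v Iv. exact (Iv (exist _ J HJ)).
  - intros J [HJ HJmin] v. split.
    + intros Jv. apply (HJmin Imin Hmin); [|exact Jv].
      intros u Iu. exact (Iu (exist _ J HJ)).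
    + intros Iv. exact (Iv (exist _ J HJ)).
Qed.

End Graph.

Theorem lemma2p4 (V : Type) (adj : V -> V -> Prop) :
  simple_graph V adj -> connected V adj -> has_cycle V adj ->
  (forall (K : Type) (F : K -> V -> Prop),
     (forall k, pre_cycle_core V adj (F k)) ->
     pre_cycle_core V adj (fun v => forall k, F k v)) /\
  (exists I : V -> Prop, minimal_pre_cycle_core V adj I /\
     forall J : V -> Prop, minimal_pre_cycle_core V adj J -> forall v, J v <-> I v).
Proof.
  intros [Hsym _] Hconn _.
  split.
  - intros K F HF. exact (pre_cycle_core_bigcap V adj Hsym K F Hconn HF).
  - exact (minimal_pre_cycle_core_unique V adj Hsym Hconn).
Qed.
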